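(* Let $H<G$ be groups with $H$ co-sofic in $G$. Then $H<G$ is relatively sofic over $G$.
   Context: $H$ is co-sofic in $G$ if there exist two decreasing sequences $(G_i)_{i\in\mathbb N}$ and $(H_i)_{i\in\mathbb N}$ of subgroups of $G$ such that $\bigcap_i G_i=H$, $H_i<G_i$, $H_i\triangleleft G$, $G/H_i$ is sofic, and $G_i/H_i$ is amenable for all $i$. $H<G$ is relatively sofic over a group $K$ if there exist a sequence of inclusions of groups $(H'_i<G'_i)_{i\in\mathbb N}$ with all $G'_i$ sofic and all $H'_i$ amenable, a free ultrafilter $\omega$ on $\mathbb N$, and an embedding $\pi:G\to\prod_\omega(G'_i\times K)$ into the algebraic ultraproduct such that $\pi(G)\cap\prod_\omega(H'_i\times K)=\pi(H)$. The algebraic ultraproduct is $\prod_\omega L_i=(\prod_i L_i)/N$ with $N=\{(g_i):\{i:g_i=1\}\in\omega\}$. *)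

From Stdlib Require Import Reals.
From mathcomp Require Import all_boot all_algebra all_fingroup.

Set Implicit Arguments.
Unset Strict Implicit.
Unset Printing Implicit Defensive.

Record AbsGroup := MkGroup {
  gcar :> Type;
  gmul : gcar -> gcar -> gcar;
  gone : gcar;
  ginv : gcar -> gcar;
  gmulA : forall x y z, gmul x (gmul y z) = gmul (gmul x y) z;
  gmul1 : forall x, gmul gone x = x;
  gmulV : forall x, gmul (ginv x) x = gone
}.

Arguments gmul {a}.
Arguments gone {a}.
Arguments ginv {a}.

Definition is_subgroup (G : AbsGroup) (P : G -> Prop) : Prop :=
  P gone /\ (forall x y, P x -> P y -> P (gmul x y)) /\ (forall x, P x -> P (ginv x)).

Definition is_normal (G : AbsGroup) (P : G -> Prop) : Prop :=
  is_subgroup P /\ forall g x, P x -> P (gmul (ginv g) (gmul x g)).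

Definition hdist (n : nat) (s t : {perm 'I_n}) : rat :=
  (#|[set i | s i != t i]|%:R / n%:R)%R.

(* Soficity of the group whose elements are the classes of the equivalence
   [e] on [T] with product induced by [m] (for e = eq this is soficity of
   the group itself; for e x y := N (x^-1 y) it is soficity of G/N).
   A sofic approximation is a map on classes (i.e. a map on T constant on
   e-classes) into Sym(n), n > 0. *)
Definition sofic_setoid (T : Type) (e : T -> T -> Prop) (m : T -> T -> T) : Prop :=
  forall (F : list T) (eps : rat), (0 < eps)%R ->
  exists n : nat, exists sigma : T -> {perm 'I_n},
    (0 < n)%N /\
    (forall x y, e x y -> sigma x = sigma y) /\
    (forall g h, List.In g F -> List.In h F ->
        (hdist (sigma (m g h)) ((sigma g * sigma h)%g) < eps)%R) /\
    (forall g h, List.In g F -> List.In h F -> ~ e g h ->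
        (1 - eps < hdist (sigma g) (sigma h))%R).

Definition sofic (G : AbsGroup) : Prop := sofic_setoid (@eq G) (@gmul G).

Definition quotient_sofic (G : AbsGroup) (N : G -> Prop) : Prop :=
  sofic_setoid (fun x y : G => N (gmul (ginv x) y)) (@gmul G).

(* Amenability of the group S/e, where S is a subgroup of the group carried
   by T (with product m) and e is the congruence defining the quotient:
   there is a finitely additive, left-invariant probability measure on all
   subsets of S/e, i.e. on all e-saturated subsets of S. *)
Definition saturated (T : Type) (S : T -> Prop) (e : T -> T -> Prop)
  (A : T -> Prop) : Prop :=
  (forall x, A x -> S x) /\ (forall x y, A x -> S y -> e x y -> A y).

Definition amenable_setoid (T : Type) (S : T -> Prop) (e : T -> T -> Prop)
  (m : T -> T -> T) : Prop :=
  exists mu : (T -> Prop) -> R,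
    (forall A, saturated S e A -> Rle 0 (mu A)) /\
    mu S = R1 /\
    (forall A B, saturated S e A -> saturated S e B ->
       (forall x, A x -> B x -> False) ->
       mu (fun x => A x \/ B x) = Rplus (mu A) (mu B)) /\
    (forall g A, S g -> saturated S e A ->
       mu (fun x => exists a, A a /\ e x (m g a)) = mu A).

Definition amenable_subgroup (G : AbsGroup) (S : G -> Prop) : Prop :=
  amenable_setoid S (@eq G) (@gmul G).

Definition quotient_amenable (G : AbsGroup) (Gi Hi : G -> Prop) : Prop :=
  amenable_setoid Gi (fun x y : G => Hi (gmul (ginv x) y)) (@gmul G).

Definition cosofic (G : AbsGroup) (H : G -> Prop) : Prop :=
  exists (Gs Hs : nat -> G -> Prop),
    (forall i, is_subgroup (Gs i)) /\
    (forall i, is_normal (Hs i)) /\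
    (forall i x, Gs i.+1 x -> Gs i x) /\
    (forall i x, Hs i.+1 x -> Hs i x) /\
    (forall x, H x <-> forall i, Gs i x) /\
    (forall i x, Hs i x -> Gs i x) /\
    (forall i, quotient_sofic (Hs i)) /\
    (forall i, quotient_amenable (Gs i) (Hs i)).

Definition free_ultrafilter (w : (nat -> Prop) -> Prop) : Prop :=
  w (fun _ => True) /\ ~ w (fun _ => False) /\
  (forall A B : nat -> Prop, w A -> (forall i, A i -> B i) -> w B) /\
  (forall A B : nat -> Prop, w A -> w B -> w (fun i => A i /\ B i)) /\
  (forall A : nat -> Prop, w A \/ w (fun i => ~ A i)) /\
  (* free: contains no finite set (equivalently, all cofinite sets) *)
  (forall N : nat, w (fun i => (N <= i)%N)).

(* elements of prod_i (L_i x K): sequences; two sequences are identified in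
   the algebraic ultraproduct iff they agree on an w-large set *)
Definition useq (L : nat -> AbsGroup) (K : AbsGroup) : Type :=
  forall i : nat, (L i * K)%type.

Definition useq_mul (L : nat -> AbsGroup) (K : AbsGroup) (x y : useq L K) : useq L K :=
  fun i => (gmul (x i).1 (y i).1, gmul (x i).2 (y i).2).

Definition ueqv (w : (nat -> Prop) -> Prop) (L : nat -> AbsGroup) (K : AbsGroup)
  (x y : useq L K) : Prop := w (fun i => x i = y i).

(* pi : G -> prod_w (L_i x K) is an embedding (injective homomorphism),
   pi given on representatives *)
Definition ultra_embedding (w : (nat -> Prop) -> Prop) (L : nat -> AbsGroup)
  (K G : AbsGroup) (pi : G -> useq L K) : Prop :=
  (forall g h, ueqv w (pi (gmul g h)) (useq_mul (pi g) (pi h))) /\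
  (forall g h, ueqv w (pi g) (pi h) -> g = h).

Definition in_ultra_sub (w : (nat -> Prop) -> Prop) (L : nat -> AbsGroup)
  (K : AbsGroup) (Hs : forall i, L i -> Prop) (x : useq L K) : Prop :=
  exists y : useq L K, ueqv w x y /\ forall i, Hs i (y i).1.

Definition rel_sofic (G : AbsGroup) (H : G -> Prop) (K : AbsGroup) : Prop :=
  exists (L : nat -> AbsGroup) (Hs : forall i, L i -> Prop),
    (forall i, is_subgroup (Hs i)) /\
    (forall i, sofic (L i)) /\
    (forall i, amenable_subgroup (Hs i)) /\
    exists (w : (nat -> Prop) -> Prop) (pi : G -> useq L K),
      free_ultrafilter w /\ ultra_embedding w pi /\
      (forall g, in_ultra_sub w Hs (pi g) <-> H g).

(* Take L_i := G/H_i, which is sofic, with its amenable subgroup H'_i := G_i/H_i,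
   any free ultrafilter w, and pi g := (g H_i, g)_i.  The second coordinate
   makes pi injective.  The class of pi g lies in prod_w (H'_i x G) iff g is in
   G_i for w-many i; since the G_i decrease and w contains every cofinite set,
   this happens iff g lies in every G_i, that is, in H. *)

From Stdlib Require Import Reals.
From mathcomp Require Import all_boot all_algebra all_fingroup.
From mathcomp Require Import boolp filter.

Set Implicit Arguments.
Unset Strict Implicit.
Unset Printing Implicit Defensive.

Section GroupFacts.
Context {G : AbsGroup}.
Implicit Types x y z : G.

Lemma gmulVr x : gmul x (ginv x) = gone.
Proof.
rewrite -(gmul1 (gmul x (ginv x))) -{1}(gmulV (ginv x)).
by rewrite -gmulA (gmulA (ginv x)) gmulV gmul1 gmulV.
Qed.

Lemma gmulr1 x : gmul x gone = x.
Proof. by rewrite -(gmulV x) gmulA gmulVr gmul1. Qed.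

Lemma ginv_uniq x y : gmul x y = gone -> x = ginv y.
Proof. by move=> xy1; rewrite -(gmulr1 x) -(gmulVr y) gmulA xy1 gmul1. Qed.

Lemma ginvK x : ginv (ginv x) = x.
Proof. by symmetry; apply: ginv_uniq; rewrite gmulVr. Qed.

Lemma ginvM x y : ginv (gmul x y) = gmul (ginv y) (ginv x).
Proof.
symmetry; apply: ginv_uniq.
by rewrite -gmulA (gmulA (ginv x)) gmulV gmul1 gmulV.
Qed.

End GroupFacts.

Section Quotient.
Context {G : AbsGroup} {N : G -> Prop}.
Hypothesis nN : is_normal N.
Implicit Types x y a b : G.

Definition congr_mod x y := N (gmul (ginv x) y).

Lemma congr_mod_refl x : congr_mod x x.
Proof. by rewrite /congr_mod gmulV; case: nN => -[]. Qed.

Lemma congr_mod_sym x y : congr_mod x y -> congr_mod y x.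
Proof.
by case: nN => -[_ [_ NV]] _ /NV; rewrite /congr_mod ginvM ginvK.
Qed.

Lemma congr_mod_trans x y z : congr_mod x y -> congr_mod y z -> congr_mod x z.
Proof.
case: nN => -[_ [NM _]] _ xy /(NM _ _ xy).
by rewrite /congr_mod -gmulA (gmulA y) gmulVr gmul1.
Qed.

Lemma congr_modM x y a b :
  congr_mod x a -> congr_mod y b -> congr_mod (gmul x y) (gmul a b).
Proof.
case: nN => -[_ [NM _]] NJ xa /(NM _ _ (NJ y _ xa)).
by rewrite /congr_mod ginvM -!gmulA (gmulA y) gmulVr gmul1.
Qed.

Lemma congr_modV x a : congr_mod x a -> congr_mod (ginv x) (ginv a).
Proof.
move=> xa; apply: congr_mod_sym; case: nN => _ /(_ (ginv x) _ xa).
by rewrite /congr_mod !ginvK !gmulA gmulVr gmul1.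
Qed.

(* Elements of G/N are the cosets themselves, so that equality in the
   quotient is Leibniz equality, as [sofic] and [amenable_subgroup] require. *)
Definition coset x : G -> Prop := congr_mod x.

Definition quotient_car := {A : G -> Prop | exists x, A = coset x}.

Definition qproj x : quotient_car := exist _ (coset x) (ex_intro _ x erefl).

Definition qrep (c : quotient_car) : G := proj1_sig (cid (proj2_sig c)).

Lemma qrepK c : qproj (qrep c) = c.
Proof.
rewrite /qproj /qrep; case: c => A hA /=; case: (cid hA) => x hx /=; subst A.
by congr exist; apply: Prop_irrelevance.
Qed.

Lemma qproj_surj c : exists x, c = qproj x.
Proof. by exists (qrep c); rewrite qrepK. Qed.

Lemma qproj_eq {x y} : congr_mod x y -> qproj x = qproj y.
Proof.
move=> xy; rewrite /qproj.
have exy : coset x = coset y.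
  apply: funext => z; apply: propext; split.
  - exact/congr_mod_trans/congr_mod_sym.
  - exact: congr_mod_trans.
move: (ex_intro _ x erefl : exists u, coset x = coset u).
move: (ex_intro _ y erefl : exists u, coset y = coset u).
by rewrite exy => p q; congr exist; apply: Prop_irrelevance.
Qed.

Lemma qproj_eqP x y : qproj x = qproj y <-> congr_mod x y.
Proof.
split; last exact: qproj_eq.
move=> /(f_equal (@proj1_sig _ _)) /= exy.
by have : coset x y by rewrite exy; apply: congr_mod_refl.
Qed.

Lemma congr_mod_qrep x : congr_mod x (qrep (qproj x)).
Proof. by apply/qproj_eqP; rewrite qrepK. Qed.

Definition qmul (c d : quotient_car) := qproj (gmul (qrep c) (qrep d)).

Definition qinv (c : quotient_car) := qproj (ginv (qrep c)).

Lemma qprojM x y : qmul (qproj x) (qproj y) = qproj (gmul x y).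
Proof. by apply/qproj_eq/congr_mod_sym/congr_modM; apply: congr_mod_qrep. Qed.

Lemma qprojV x : qinv (qproj x) = qproj (ginv x).
Proof. by apply/qproj_eq/congr_mod_sym/congr_modV/congr_mod_qrep. Qed.

Lemma qmulA c d e : qmul c (qmul d e) = qmul (qmul c d) e.
Proof.
have [[x ->] [y ->]] := conj (qproj_surj c) (qproj_surj d).
by have [z ->] := qproj_surj e; rewrite !qprojM gmulA.
Qed.

Lemma qmul1 c : qmul (qproj gone) c = c.
Proof. by have [x ->] := qproj_surj c; rewrite qprojM gmul1. Qed.

Lemma qmulV c : qmul (qinv c) c = qproj gone.
Proof. by have [x ->] := qproj_surj c; rewrite qprojV qprojM gmulV. Qed.

Definition quotient_group : AbsGroup := MkGroup qmulA qmul1 qmulV.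

Lemma quotient_group_sofic : quotient_sofic N -> sofic quotient_group.
Proof.
move=> sofN F eps eps_gt0.
have [n [sigma [n_gt0 [sigmaN [sigmaM sigma_sep]]]]] :=
  sofN (map qrep F) _ eps_gt0.
exists n, (sigma \o qrep); split=> //; split; first by move=> ? ? ->.
split=> c d Fc Fd.
  rewrite /= /qmul -(sigmaN _ _ (congr_mod_qrep _)).
  by apply: sigmaM; apply: List.in_map.
move=> cd; apply: sigma_sep; try exact: List.in_map.
by move=> /qproj_eq; rewrite !qrepK.
Qed.

Section Image.
Variable S : G -> Prop.
Hypotheses (subS : is_subgroup S) (NS : forall x, N x -> S x).

Definition qimage (c : quotient_group) : Prop := exists x, S x /\ c = qproj x.

Lemma qimage_proj x : qimage (qproj x) <-> S x.
Proof.
split=> [[y [Sy /esym /qproj_eqP /NS Syx]]|Sx]; last by exists x.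
case: subS => _ [SM _]; have := SM _ _ Sy Syx.
by rewrite gmulA gmulVr gmul1.
Qed.

Lemma qimage_subgroup : is_subgroup qimage.
Proof.
case: subS => S1 [SM SV]; split; first by exists gone.
split=> [_ _ [x [Sx ->]] [y [Sy ->]]|_ [x [Sx ->]]].
  by exists (gmul x y); split; [apply: SM | apply: qprojM].
by exists (ginv x); split; [apply: SV | apply: qprojV].
Qed.

Lemma qimage_amenable : quotient_amenable S N -> amenable_subgroup qimage.
Proof.
move=> [mu [mu_ge0 [muS [muU muJ]]]].
exists (fun A => mu (A \o qproj)).
have sat A : saturated qimage eq A -> saturated S congr_mod (A \o qproj).
  move=> [AS _]; split=> [x /AS /qimage_proj //|x y Ax _ xy].
  by rewrite /= -(qproj_eq xy).
split; first by move=> A /sat /mu_ge0.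
split.
  suff -> : qimage \o qproj = S by [].
  by apply: funext => x; apply: propext; apply: qimage_proj.
split=> [A B /sat satA /sat satB AB|_ A [g [Sg ->]] /sat satA].
  exact: muU (fun x => AB (qproj x)).
rewrite -(muJ g _ Sg satA); congr mu; apply: funext => x; apply: propext.
split=> [[c [Ac /= xgc]]|[a [Aa xga]]].
  have [a ca] := qproj_surj c; subst c.
  by exists a; split=> //; apply/qproj_eqP; rewrite xgc qprojM.
by exists (qproj a); split=> //=; rewrite qprojM; apply: qproj_eq.
Qed.

End Image.

End Quotient.

Arguments qproj {G} N x.
Arguments qimage {G N} nN S c.

Lemma free_ultrafilter_exists : exists w, free_ultrafilter w.
Proof.
have [w [w_ultra cofin_w]] := ultraFilterLemma (F := @eventually) _.
have w_proper : ProperFilter w by apply: ultra_proper.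
exists w; split; first exact: filterT.
split; first exact: filter_not_empty.
split; first by move=> A B wA AB; apply: filterS wA.
split; first by move=> A B; apply: filterI.
split; first by move=> A; apply: in_ultra_setVsetC.
by move=> n; apply: cofin_w; exists n.
Qed.

Lemma decreasing_le (P : nat -> Prop) :
  (forall i, P i.+1 -> P i) -> forall i j, (i <= j)%N -> P j -> P i.
Proof.
move=> Pdec i j /subnK <-; elim: (j - i)%N => [//|k IHk].
by rewrite addSn => /Pdec.
Qed.

Section FreeUltrafilter.
Variable w : (nat -> Prop) -> Prop.
Hypothesis w_free : free_ultrafilter w.

Lemma free_ultrafilter_decreasing (P : nat -> Prop) :
  (forall i, P i.+1 -> P i) -> w P <-> forall i, P i.
Proof.
case: w_free => wT [wF [wS [wI [_ wcofin]]]] Pdec.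
split=> [wP i|P_all]; last by apply: wS wT _ => i _.
have [//|nPi] := pselect (P i).
case: wF; apply: wS (wI _ _ wP (wcofin i)) _ => j [Pj ij].
exact: nPi (decreasing_le Pdec ij Pj).
Qed.

Lemma in_ultra_subP (L : nat -> AbsGroup) (K : AbsGroup)
    (Hs : forall i, L i -> Prop) (x : useq L K) :
  (forall i, Hs i gone) -> in_ultra_sub w Hs x <-> w (fun i => Hs i (x i).1).
Proof.
case: w_free => _ [_ [wS [wI _]]] Hs1; split.
  by move=> [y [xy Hy]]; apply: wS xy _ => i ->.
move=> wHx.
exists (fun i => if pselect (Hs i (x i).1) then x i else (gone, (x i).2)).
split; last by move=> i; case: pselect.
by apply: wS wHx _ => i Hxi; case: pselect.
Qed.

Lemma diagonal_ultra_embedding (L : nat -> AbsGroup) (G : AbsGroup)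
    (phi : forall i, G -> L i) :
  (forall i g h, phi i (gmul g h) = gmul (phi i g) (phi i h)) ->
  ultra_embedding w (fun g i => (phi i g, g)).
Proof.
case: w_free => wT [wF [wS _]] phiM; split.
  by move=> g h; apply: wS wT _ => i _; rewrite /useq_mul /= phiM.
move=> g h wgh; have [//|neq_gh] := pselect (g = h).
by case: wF; apply: wS wgh _ => i [].
Qed.

End FreeUltrafilter.

Theorem theorem2p17 (G : AbsGroup) (H : G -> Prop) :
  is_subgroup H -> cosofic H -> rel_sofic H G.
Proof.
move=> _ [Gs [Hs [subGs [nHs [Gs_dec [_ [H_cap [HsGs [sofHs amenHs]]]]]]]]].
pose L i := quotient_group (nHs i).
have qimageE i x : qimage (nHs i) (Gs i) (qproj (Hs i) x) <-> Gs i x.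
  exact: (qimage_proj (nHs i) (subGs i) (HsGs i) x).
exists L, (fun i => qimage (nHs i) (Gs i)).
split; first by move=> i; apply: qimage_subgroup.
split; first by move=> i; apply: quotient_group_sofic.
split; first by move=> i; exact: qimage_amenable (subGs i) (HsGs i) (amenHs i).
have [w w_free] := free_ultrafilter_exists.
exists w, (fun g i => (qproj (Hs i) g, g)); split=> //; split.
  exact: (diagonal_ultra_embedding w_free (L := L)
            (fun i g h => esym (qprojM (nHs i) g h))).
move=> g; rewrite (in_ultra_subP w_free (L := L)) /=; last first.
  by move=> i; apply/qimageE; case: (subGs i).
have -> : (fun i => qimage (nHs i) (Gs i) (qproj (Hs i) g)) = (fun i => Gs i g).
  by apply: funext => i; apply/propext/qimageE.
rewrite (free_ultrafilter_decreasing w_free (fun i => Gs_dec i g)).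
exact: iff_sym (H_cap g).
Qed.
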